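(* For $n\geq 1$, the polynomials $\widehat{A}_n(t,q)$ satisfy $$2\widehat{A}_{n+1}(t,q)=(1+tq)\widehat{A}_n(tq,q)+(1+tq^n)\widehat{A}_n(t,q)+\sum_{i=1}^{n-1}(1+t^2q^{2i+1})\binom{n}{i}\widehat{A}_i(t,q)\widehat{A}_{n-i}(tq^{i+1},q),$$ with $\widehat{A}_1(t,q)=1$.
   Context: For $\pi=\pi_1\cdots\pi_n\in\mathfrak{S}_n$ (permutations of $\{1,\dots,n\}$), $\widehat{D}(\pi)=\{2i:\pi_{2i}<\pi_{2i+1}\}\cup\{2i+1:\pi_{2i+1}>\pi_{2i+2}\}$ (indices in $\{1,\dots,n-1\}$), ${\rm altdes}(\pi)=|\widehat{D}(\pi)|$, ${\rm altmaj}(\pi)=\sum_{i\in\widehat{D}(\pi)}i$, and $\widehat{A}_n(t,q)=\sum_{\pi\in\mathfrak{S}_n}t^{{\rm altdes}(\pi)}q^{{\rm altmaj}(\pi)}$. *)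

From mathcomp Require Import all_boot all_order all_algebra all_fingroup.
Set Implicit Arguments. Unset Strict Implicit. Unset Printing Implicit Defensive.
Import GRing.Theory.
Local Open Scope ring_scope.

(* A permutation s : 'S_n is read as the word pi_1 ... pi_n with
   pi_k = s (k-1) (values in {0..n-1}, an order-preserving relabelling of {1..n}).
   word s = [:: pi_1; ...; pi_n], so pi_k = nth 0 (word s) k.-1. *)
Definition word n (s : 'S_n) : seq nat := [seq val (s i) | i <- enum 'I_n].

Definition pi_at n (s : 'S_n) (k : nat) : nat := nth 0%N (word s) k.-1.

Definition in_altD n (s : 'S_n) (i : nat) : bool :=
  if odd i then (pi_at s i.+1 < pi_at s i)%N else (pi_at s i < pi_at s i.+1)%N.

Definition altD n (s : 'S_n) : seq nat := [seq i <- iota 1 n.-1 | in_altD s i].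

Definition altdes n (s : 'S_n) : nat := size (altD s).
Definition altmaj n (s : 'S_n) : nat := sumn (altD s).

Definition Ahat (R : comPzRingType) (n : nat) (t q : R) : R :=
  \sum_(s : 'S_n) t ^+ altdes s * q ^+ altmaj s.

From mathcomp Require Import all_boot all_order all_algebra all_fingroup.
From mathcomp Require Import zify ring.
Import GRing.Theory.
Local Open Scope ring_scope.
Set Implicit Arguments. Unset Strict Implicit. Unset Printing Implicit Defensive.

(* Write a permutation of {0..n-1} as a word and its weight t^altdes q^altmaj as a
   product over adjacent positions.  Summed over all arrangements of any set of
   n distinct naturals, this weight gives Ahat n: the sum only sees relative order,
   and it is unchanged when the parity convention for alternating descents is
   swapped, because x |-> n-1-x reverses every comparison.  Now cut a permutation
   of {0..n} at its maximum n, w = s ++ n :: u with |s| = i.  The weight factors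
   as the weight of s times that of u shifted i+1 positions to the right (so t
   becomes t q^(i+1)), times the contribution of the two comparisons involving n.
   That contribution is 1 under one parity convention and t^2 q^(2i+1) under the
   other (t q or t q^n when s or u is empty).  Adding the two conventions gives
   2 Ahat (n+1), and there are C(n,i) choices for the letters of s. *)

Lemma permutations_map_in (T1 T2 : eqType) (f : T1 -> T2) (g : T2 -> T1) (s : seq T1) :
  {in s, cancel f g} ->
  perm_eq (permutations (map f s)) (map (map f) (permutations s)).
Proof.
move=> fK.
have gfK u : perm_eq u s -> map g (map f u) = u.
  move=> us; rewrite -map_comp -[RHS]map_id; apply/eq_in_map => x xu /=.
  by rewrite fK // -(perm_mem us).
apply: uniq_perm; first exact: permutations_uniq.
  rewrite map_inj_in_uniq ?permutations_uniq // => u v.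
  by rewrite !mem_permutations => us vs fuv; rewrite -(gfK u us) -(gfK v vs) fuv.
move=> u; rewrite mem_permutations; apply/idP/mapP => [u_fs | [v vs ->]].
  exists (map g u); last first.
    rewrite -map_comp -[LHS]map_id; apply/eq_in_map => x xu /=.
    have /mapP [y ys ->] : x \in map f s by rewrite -(perm_mem u_fs).
    by rewrite fK.
  by rewrite mem_permutations -[X in perm_eq _ X](gfK s (perm_refl s)); apply: perm_map.
by apply: perm_map; rewrite -mem_permutations.
Qed.

Lemma flatten_map_uniq (A B : eqType) (s : seq A) (G : A -> seq B) (key : B -> A) :
  uniq s -> (forall a, uniq (G a)) -> (forall a b, b \in G a -> key b = a) ->
  uniq (flatten (map G s)).
Proof.
move=> us uG keyG; elim: s us => [|a s IH] //= /andP [a_s us].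
rewrite cat_uniq uG IH // andbT; apply/hasPn => b /flatten_mapP [a' a's bG'].
by apply: contraNN a_s => bG; rewrite -(keyG _ _ bG) (keyG _ _ bG').
Qed.

Lemma take_index_cat (T : eqType) (x : T) s u : x \notin s ->
  take (index x (s ++ x :: u)) (s ++ x :: u) = s.
Proof. by move=> xs; rewrite index_cat (negbTE xs) index_head addn0 take_size_cat. Qed.

Lemma cat_cons_inj (T : eqType) (x : T) s1 s2 u1 u2 : x \notin s1 -> x \notin s2 ->
  s1 ++ x :: u1 = s2 ++ x :: u2 -> s1 = s2 /\ u1 = u2.
Proof.
move=> xs1 xs2 eq12; have eq_s : s1 = s2.
  by rewrite -(take_index_cat u1 xs1) -(take_index_cat u2 xs2) eq12.
by split=> //; move/eqP: eq12; rewrite eq_s eqseq_cat // eqxx => /eqP [].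
Qed.

Lemma sum_set_by_card (T : finType) (V : nmodType) (F : {set T} -> V) :
  \sum_(A : {set T}) F A = \sum_(0 <= i < #|T|.+1) \sum_(A : {set T} | #|A| == i) F A.
Proof.
rewrite big_mkord (partition_big (fun A : {set T} => inord #|A| : 'I_#|T|.+1) xpredT) //.
apply: eq_bigr => i _; apply: eq_bigl => A.
by rewrite -val_eqE /= inordK // ltnS max_card.
Qed.

Lemma sum_card_eq_const (T : finType) (V : nmodType) (F : {set T} -> V) i c :
  (forall A : {set T}, #|A| = i -> F A = c) ->
  \sum_(A : {set T} | #|A| == i) F A = c *+ 'C(#|T|, i).
Proof.
move=> F_c; rewrite (eq_bigr (fun _ => c)) => [|A /eqP]; last exact: F_c.
by rewrite -card_draws -sumr_const; apply: eq_bigl => A; rewrite inE.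
Qed.

Section AlternatingWeight.
Variable R : comPzRingType.
Implicit Types (t q : R) (b c : bool) (k : nat) (w : seq nat).

Definition alt_desc b k (x y : nat) : bool :=
  if odd k (+) b then (y < x)%N else (x < y)%N.

(* For [b = false], [altw t q b k w] is t^altdes q^altmaj of the word [w] when its
   first letter sits at position [k]; [b = true] swaps the conditions at odd and
   even positions. *)
Fixpoint altw t q b k w : R :=
  if w is x :: ((y :: _) as w') then
    (if alt_desc b k x y then t * q ^+ k else 1) * altw t q b k.+1 w'
  else 1.

Lemma altw_cons2 t q b k x y w :
  altw t q b k [:: x, y & w] =
  (if alt_desc b k x y then t * q ^+ k else 1) * altw t q b k.+1 (y :: w).
Proof. by []. Qed.

Lemma altw_seq1 t q b k x : altw t q b k [:: x] = 1. Proof. by []. Qed.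

Arguments altw : simpl never.

Lemma altw_addn t q b k s w :
  altw t q b (k + s) w = altw (t * q ^+ s) q (b (+) odd s) k w.
Proof.
elim: w k => [|x [|y w] IH] k //.
rewrite !altw_cons2 -IH addSn; congr (_ * _).
have -> : alt_desc b (k + s) x y = alt_desc (b (+) odd s) k x y.
  by rewrite /alt_desc oddD [b (+) _]addbC addbA.
by case: ifP => // _; rewrite -mulrA -exprD addnC.
Qed.

Lemma altw_cat t q b k s y u :
  altw t q b k (s ++ y :: u) =
  altw t q b k (rcons s y) * altw t q b (k + size s) (y :: u).
Proof.
elim: s k => [|x [|z s] IH] k /=; first by rewrite mul1r addn0.
  by rewrite !altw_cons2 altw_seq1 mulr1 addn1.
by rewrite !altw_cons2 -cat_cons IH mulrA addSnnS.
Qed.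

Lemma altw_rcons t q b k x s y :
  altw t q b k (rcons (x :: s) y) =
  altw t q b k (x :: s) *
  (if alt_desc b (k + size s) (last x s) y then t * q ^+ (k + size s) else 1).
Proof.
elim: s k x => [|z s IH] k x /=; first by rewrite altw_cons2 !altw_seq1 addn0 mulr1 mul1r.
by rewrite !altw_cons2 -rcons_cons IH mulrA addSnnS.
Qed.

Lemma altw_map t q b c k (f : nat -> nat) w :
  {in w &, forall x y, (f x < f y)%N = if c then (y < x)%N else (x < y)%N} ->
  altw t q b k (map f w) = altw t q (b (+) c) k w.
Proof.
elim: w k => [|x [|y w] IH] k // f_mono.
rewrite !map_cons !altw_cons2 -map_cons IH; last first.
  by move=> u v u_w v_w; apply: f_mono; rewrite inE ?u_w ?v_w orbT.
suff -> : alt_desc b k (f x) (f y) = alt_desc (b (+) c) k x y by [].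
by rewrite /alt_desc !f_mono ?inE ?eqxx ?orbT // addbA; case: (_ (+) b); destruct c.
Qed.

Lemma altw_prod t q b k w :
  altw t q b k w = \prod_(i <- iota k (size w).-1)
    (if alt_desc b i (nth 0%N w (i - k)) (nth 0%N w (i - k).+1) then t * q ^+ i else 1).
Proof.
elim: w k => [|x [|y w] IH] k; rewrite ?big_nil //.
rewrite altw_cons2 IH /= big_cons subnn; congr (_ * _).
by apply: eq_big_seq => i; rewrite mem_iota => /andP [ki _]; rewrite -(subnSK ki).
Qed.

Lemma altw_max_head t q b n z u : (z < n)%N ->
  altw t q b 1 [:: n, z & u] =
  (if b then 1 else t * q) * altw (t * q) q (~~ b) 1 (z :: u).
Proof.
move=> zn; rewrite altw_cons2 (altw_addn _ _ _ 1 1) addbT /alt_desc /= expr1.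
by rewrite zn ltnNge ltnW //; case: b.
Qed.

Lemma altw_max_last t q b n x s : all (fun y => y < n)%N (x :: s) ->
  altw t q b 1 (rcons (x :: s) n) =
  altw t q b 1 (x :: s) * (if odd (size s).+1 (+) b then 1 else t * q ^+ (size s).+1).
Proof.
move=> /allP lt_n; have ln : (last x s < n)%N by apply/lt_n/mem_last.
by rewrite altw_rcons /alt_desc add1n ln ltnNge ltnW //; case: (_ (+) b).
Qed.

Lemma altw_max_inner t q b n x s z u : all (fun y => y < n)%N (x :: s) -> (z < n)%N ->
  altw t q b 1 ((x :: s) ++ n :: z :: u) =
  altw t q b 1 (x :: s) * altw (t * q ^+ (size s).+2) q (b (+) odd (size s)) 1 (z :: u) *
  (if odd (size s).+1 (+) b then 1 else t ^+ 2 * q ^+ (2 * (size s).+1 + 1)).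
Proof.
move=> lt_n zn.
have -> : t ^+ 2 * q ^+ (2 * (size s).+1 + 1) = t * q ^+ (size s).+1 * (t * q ^+ (size s).+2).
  by rewrite mulrACA -expr2 -exprD; congr (_ * _ ^+ _); lia.
rewrite altw_cat altw_max_last // altw_cons2 -addnS altw_addn /alt_desc /= !add1n /= negbK.
rewrite zn ltnNge (ltnW zn).
by case: (odd (size s)); case: b => /=; ring.
Qed.

End AlternatingWeight.
Arguments altw : simpl never.

Section SumsOverArrangements.
Variable R : comPzRingType.
Implicit Types (t q : R) (b c : bool) (k : nat).

Lemma big_permutations_map (T1 T2 : eqType) (F : seq T2 -> R)
    (f : T1 -> T2) (g : T2 -> T1) (s : seq T1) :
  {in s, cancel f g} ->
  \sum_(w <- permutations (map f s)) F w = \sum_(w <- permutations s) F (map f w).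
Proof. by move=> fK; rewrite (perm_big _ (permutations_map_in fK)) big_map. Qed.

Lemma sum_altw_map t q b c k (f g : nat -> nat) (S : seq nat) :
  {in S, cancel f g} ->
  {in S &, forall x y, (f x < f y)%N = if c then (y < x)%N else (x < y)%N} ->
  \sum_(w <- permutations (map f S)) altw t q b k w =
  \sum_(w <- permutations S) altw t q (b (+) c) k w.
Proof.
move=> fK f_mono; rewrite (big_permutations_map _ fK).
apply: eq_big_seq => w; rewrite mem_permutations => /perm_mem wS.
by apply: altw_map => x y; rewrite !wS; apply: f_mono.
Qed.

Lemma sum_altw_relabel t q b k (S : seq nat) : uniq S ->
  \sum_(w <- permutations S) altw t q b k w =
  \sum_(w <- permutations (iota 0 (size S))) altw t q b k w.
Proof.
move=> uS; set S' := sort leq S.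
have S'S : perm_eq S' S by rewrite perm_sort.
rewrite -(perm_big _ (perm_permutations S'S)) -(perm_size S'S).
have S'_lt : sorted ltn S'.
  by rewrite ltn_sorted_uniq_leq (perm_uniq S'S) uS sort_sorted //; apply: leq_total.
rewrite -[in LHS](mkseq_nth 0%N S') /mkseq (@sum_altw_map t q b false k _ (index^~ S')) ?addbF.
- by [].
- by move=> i; rewrite mem_iota => /andP [_ i_lt]; rewrite index_uniq // (sorted_uniq ltn_trans ltnn S'_lt).
move=> i j; rewrite !mem_iota /= => i_lt j_lt.
have nth_lt := sorted_ltn_nth ltn_trans 0%N S'_lt.
case: (ltngtP i j) => [ij | ji | ->]; first by rewrite nth_lt.
  by apply/negbTE; rewrite -leqNgt ltnW // nth_lt.
by rewrite ltnn.
Qed.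

Lemma sum_altw_compl t q b k m :
  \sum_(w <- permutations (iota 0 m)) altw t q b k w =
  \sum_(w <- permutations (iota 0 m)) altw t q (~~ b) k w.
Proof.
pose f x := (m.-1 - x)%N.
have f_iota : perm_eq (map f (iota 0 m)) (iota 0 m).
  apply: uniq_perm; rewrite ?iota_uniq //.
    by rewrite map_inj_in_uniq ?iota_uniq // => x y; rewrite !mem_iota /f /=; lia.
  move=> x; rewrite mem_iota; apply/mapP/idP => [[y] | x_lt].
    by rewrite mem_iota /f => y_lt ->; lia.
  by exists (m.-1 - x)%N; rewrite ?mem_iota /f; lia.
rewrite -(perm_big _ (perm_permutations f_iota)) (@sum_altw_map t q b true k f f) ?addbT //.
  by move=> x; rewrite mem_iota /f /=; lia.
by move=> x y; rewrite !mem_iota /f /= => x_lt y_lt; apply/idP/idP; lia.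
Qed.

End SumsOverArrangements.

Lemma word_uniq n (s : 'S_n) : uniq (word s).
Proof. by rewrite map_inj_uniq ?enum_uniq // => i j /val_inj /perm_inj. Qed.

Lemma perm_word_iota n (s : 'S_n) : perm_eq (word s) (iota 0 n).
Proof.
apply: uniq_perm; rewrite ?word_uniq ?iota_uniq // => x.
rewrite mem_iota add0n; apply/mapP/idP => [[i _ ->] | x_lt]; first exact: ltn_ord.
by exists (s^-1 (Ordinal x_lt))%g; rewrite ?mem_enum ?permKV.
Qed.

Lemma word_inj n : injective (@word n).
Proof.
move=> s1 s2 /eq_in_map eq_s; apply/permP => i; apply: val_inj.
by apply: eq_s; rewrite mem_enum.
Qed.

Lemma sum_word (V : nmodType) n (F : seq nat -> V) :
  \sum_(s : 'S_n) F (word s) = \sum_(w <- permutations (iota 0 n)) F w.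
Proof.
rewrite -(big_map (@word n) xpredT F); apply: perm_big.
set W := map _ _.
have W_uniq : uniq W by rewrite map_inj_uniq ?index_enum_uniq //; apply: word_inj.
have W_sub : {subset W <= permutations (iota 0 n)}.
  by move=> w /mapP [s _ ->]; rewrite mem_permutations perm_word_iota.
have W_size : (size (permutations (iota 0 n)) <= size W)%N.
  by rewrite size_map size_permutations ?iota_uniq // size_iota -card_Sn cardT enumT.
have [_ W_eq] := uniq_min_size W_uniq W_sub W_size.
by apply: uniq_perm; rewrite ?permutations_uniq.
Qed.

Section AhatAsWordSum.
Variable R : comPzRingType.
Implicit Types (t q : R) (b : bool).

Lemma size_sumn_filter_prod t q (P : pred nat) (l : seq nat) :
  t ^+ size (filter P l) * q ^+ sumn (filter P l) =
  \prod_(i <- l) (if P i then t * q ^+ i else 1).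
Proof.
elim: l => [|x l IH]; first by rewrite big_nil mulr1.
rewrite big_cons /=; case: (P x); last by rewrite mul1r.
by rewrite /= exprS exprD -IH mulrACA.
Qed.

Lemma Ahat_altw n t q :
  Ahat n t q = \sum_(w <- permutations (iota 0 n)) altw t q false 1 w.
Proof.
rewrite -sum_word; apply: eq_bigr => s _.
rewrite size_sumn_filter_prod altw_prod size_map size_enum_ord.
apply: eq_big_seq => i; rewrite mem_iota => /andP [i_gt0 _].
by rewrite /in_altD /pi_at /alt_desc addbF subn1 prednK.
Qed.

Lemma sum_altw_permutations t q b (L : seq nat) : uniq L ->
  \sum_(w <- permutations L) altw t q b 1 w = Ahat (size L) t q.
Proof.
by move=> uL; rewrite sum_altw_relabel // Ahat_altw; case: b; rewrite // sum_altw_compl.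
Qed.

Lemma Ahat1 t q : Ahat 1 t q = 1.
Proof. by rewrite Ahat_altw (_ : permutations (iota 0 1) = [:: [:: 0%N]]) // big_seq1. Qed.

End AhatAsWordSum.

Definition nat_enum n (X : {set 'I_n}) : seq nat := [seq val j | j <- enum X].

Definition nat_set n (s : seq nat) : {set 'I_n} := [set j : 'I_n | val j \in s].

Lemma card_setC_ord n (X : {set 'I_n}) : #|~: X| = (n - #|X|)%N.
Proof. by rewrite cardsCs setCK card_ord. Qed.

Section NatEnum.
Variable n : nat.
Implicit Types (X : {set 'I_n}) (s u : seq nat).

Lemma nat_enum_uniq X : uniq (nat_enum X).
Proof. by rewrite map_inj_uniq ?enum_uniq //; apply: val_inj. Qed.

Lemma mem_nat_enum X (j : 'I_n) : (val j \in nat_enum X) = (j \in X).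
Proof. by rewrite mem_map ?mem_enum //; apply: val_inj. Qed.

Lemma nat_enum_lt X x : x \in nat_enum X -> (x < n)%N.
Proof. by case/mapP => j _ ->; apply: ltn_ord. Qed.

Lemma size_nat_enum X : size (nat_enum X) = #|X|.
Proof. by rewrite size_map cardE. Qed.

Lemma nat_set_perm X s : perm_eq s (nat_enum X) -> nat_set n s = X.
Proof. by move=> sX; apply/setP => j; rewrite inE (perm_mem sX) mem_nat_enum. Qed.

Lemma perm_nat_enum_set s : uniq s -> all (fun x => x < n)%N s ->
  perm_eq s (nat_enum (nat_set n s)).
Proof.
move=> us /allP s_lt; apply: uniq_perm; rewrite ?nat_enum_uniq // => x.
apply/idP/idP => [xs | /mapP [j]]; last by rewrite mem_enum inE => ? ->.
by rewrite -[x]/(val (Ordinal (s_lt x xs))) mem_nat_enum inE.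
Qed.

Lemma perm_nat_enum_cat X : perm_eq (nat_enum X ++ nat_enum (~: X)) (iota 0 n).
Proof.
apply: uniq_perm; rewrite ?iota_uniq //.
  rewrite cat_uniq !nat_enum_uniq andbT /=; apply/hasPn => x /mapP [j].
  by rewrite mem_enum inE => Xj ->; rewrite mem_nat_enum.
move=> x; rewrite mem_cat mem_iota add0n; apply/idP/idP; first by case/orP => /nat_enum_lt.
by move=> x_lt; rewrite -[x]/(val (Ordinal x_lt)) !mem_nat_enum inE orbN.
Qed.

Lemma perm_iota_cat s u : perm_eq (s ++ u) (iota 0 n) ->
  perm_eq s (nat_enum (nat_set n s)) /\ perm_eq u (nat_enum (~: nat_set n s)).
Proof.
move=> su_iota; have := perm_uniq su_iota; rewrite iota_uniq cat_uniq => /and3P [us disj uu].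
have su_lt x : x \in s ++ u -> (x < n)%N by rewrite (perm_mem su_iota) mem_iota.
have lt_n v : {subset v <= s ++ u} -> all (fun x => x < n)%N v.
  by move=> v_su; apply/allP => x /v_su /su_lt.
have -> : ~: nat_set n s = nat_set n u.
  apply/setP => j; rewrite !inE; apply/idP/idP => [js | ju].
    have : val j \in s ++ u by rewrite (perm_mem su_iota) mem_iota /=.
    by rewrite mem_cat (negbTE js).
  by apply: contraNN disj => js; apply/hasP; exists (val j).
split; apply: perm_nat_enum_set => //; apply: lt_n => x xv; rewrite mem_cat xv ?orbT //.
Qed.

Lemma permutations_nat_enum_lt X s : s \in permutations (nat_enum X) ->
  all (fun x => x < n)%N s /\ size s = #|X|.
Proof.
rewrite mem_permutations => sX; rewrite (perm_size sX) size_nat_enum; split=> //.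
by apply/allP => x; rewrite (perm_mem sX) => /nat_enum_lt.
Qed.

End NatEnum.

Lemma permutations_max_split n :
  perm_eq (permutations (n :: iota 0 n))
    (flatten [seq [seq s ++ n :: u | s <- permutations (nat_enum X),
                                     u <- permutations (nat_enum (~: X))]
             | X <- index_enum {set 'I_n}]).
Proof.
have n_notin (X : {set 'I_n}) s : s \in permutations (nat_enum X) -> n \notin s.
  by rewrite mem_permutations => /perm_mem ->; apply/negP => /nat_enum_lt /[!ltnn].
apply: uniq_perm; first exact: permutations_uniq.
  apply: (@flatten_map_uniq _ _ _ _ (fun w => nat_set n (take (index n w) w))).
  - exact: index_enum_uniq.
  - move=> X; apply: allpairs_uniq; rewrite ?permutations_uniq //.
    move=> [s1 u1] [s2 u2] /allpairsP [[? ?] [/= s1X _ [-> ->]]].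
    move=> /allpairsP [[? ?] [/= s2X _ [-> ->]]] /= eq12.
    by have [-> ->] := cat_cons_inj (n_notin _ _ s1X) (n_notin _ _ s2X) eq12.
  - move=> X w /allpairsP [[s u] [/= sX _ ->]].
    rewrite take_index_cat ?(n_notin X) //; apply: nat_set_perm.
    by rewrite -mem_permutations.
move=> w; rewrite mem_permutations; apply/idP/flatten_mapP => [w_perm | ].
  have w_n : n \in w by rewrite (perm_mem w_perm) mem_head.
  move: w_perm; case/splitPr: w_n => s u.
  rewrite -cat1s perm_catCA perm_cons => /perm_iota_cat [sX uX].
  exists (nat_set n s); first exact: mem_index_enum.
  by apply/allpairsP; exists (s, u); rewrite !mem_permutations.
move=> [X _ /allpairsP [[s u] [/= sX uX ->]]].
rewrite !mem_permutations in sX uX.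
rewrite -cat1s perm_catCA perm_cons (perm_trans (perm_cat sX uX)) //.
exact: perm_nat_enum_cat.
Qed.

Lemma sum_permutations_max_split (V : nmodType) n (F : seq nat -> V) :
  \sum_(w <- permutations (n :: iota 0 n)) F w =
  \sum_(X : {set 'I_n}) \sum_(s <- permutations (nat_enum X))
     \sum_(u <- permutations (nat_enum (~: X))) F (s ++ n :: u).
Proof.
rewrite (perm_big _ (permutations_max_split n)) big_flatten big_map.
by apply: eq_bigr => X _; rewrite big_allpairs_dep.
Qed.

Section SplitAtMaximum.
Variables (R : comPzRingType) (t q : R).
Implicit Types (b : bool) (n : nat).

Definition split_weight b n (X : {set 'I_n}) : R :=
  \sum_(s <- permutations (nat_enum X)) \sum_(u <- permutations (nat_enum (~: X)))
    altw t q b 1 (s ++ n :: u).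

Lemma Ahat_succ_split b n : Ahat n.+1 t q = \sum_(X : {set 'I_n}) split_weight b X.
Proof.
rewrite -{1}(size_iota 0 n.+1) -(sum_altw_permutations t q b) ?iota_uniq //.
rewrite -sum_permutations_max_split; apply/perm_big/perm_permutations.
by rewrite -addn1 iotaD add0n cats1 perm_rcons.
Qed.

Lemma split_weight_empty b n (X : {set 'I_n}) : (0 < n)%N -> #|X| = 0%N ->
  split_weight b X = (if b then 1 else t * q) * Ahat n (t * q) q.
Proof.
move=> n_gt0 X0; rewrite /split_weight.
have -> : nat_enum X = [::] by apply/eqP; rewrite -size_eq0 size_nat_enum X0.
have -> : Ahat n (t * q) q =
          \sum_(u <- permutations (nat_enum (~: X))) altw (t * q) q (~~ b) 1 u.
  by rewrite sum_altw_permutations ?nat_enum_uniq // size_nat_enum card_setC_ord X0 subn0.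
rewrite big_seq1 mulr_sumr; apply: eq_big_seq => u /permutations_nat_enum_lt [].
case: u => [|z u] /=; last by case/andP => zn _ _; rewrite altw_max_head.
by move=> _ /esym; rewrite card_setC_ord X0 subn0 => n0; rewrite n0 in n_gt0.
Qed.

Lemma split_weight_full b n (X : {set 'I_n}) : (0 < n)%N -> #|X| = n ->
  split_weight b X = Ahat n t q * (if odd n (+) b then 1 else t * q ^+ n).
Proof.
move=> n_gt0 Xn; rewrite /split_weight.
have -> : nat_enum (~: X) = [::].
  by apply/eqP; rewrite -size_eq0 size_nat_enum card_setC_ord Xn subnn.
have -> : Ahat n t q = \sum_(s <- permutations (nat_enum X)) altw t q b 1 s.
  by rewrite sum_altw_permutations ?nat_enum_uniq // size_nat_enum Xn.
rewrite mulr_suml; apply: eq_big_seq => s /permutations_nat_enum_lt [].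
case: s => [|x s] s_lt /= s_size; first by rewrite -Xn -s_size in n_gt0.
by rewrite big_seq1 cats1 altw_max_last // s_size Xn.
Qed.

Lemma split_weight_proper b n (X : {set 'I_n}) : (0 < #|X| < n)%N ->
  split_weight b X = Ahat #|X| t q * Ahat (n - #|X|) (t * q ^+ #|X|.+1) q *
    (if odd #|X| (+) b then 1 else t ^+ 2 * q ^+ (2 * #|X| + 1)).
Proof.
case/andP => X_gt0 X_lt; rewrite /split_weight.
have -> : Ahat #|X| t q = \sum_(s <- permutations (nat_enum X)) altw t q b 1 s.
  by rewrite sum_altw_permutations ?nat_enum_uniq // size_nat_enum.
have -> : Ahat (n - #|X|) (t * q ^+ #|X|.+1) q =
          \sum_(u <- permutations (nat_enum (~: X)))
             altw (t * q ^+ #|X|.+1) q (b (+) ~~ odd #|X|) 1 u.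
  by rewrite sum_altw_permutations ?nat_enum_uniq // size_nat_enum card_setC_ord.
rewrite mulr_suml mulr_suml.
apply: eq_big_seq => s /permutations_nat_enum_lt [s_lt s_size].
rewrite mulr_sumr mulr_suml; apply: eq_big_seq => u /permutations_nat_enum_lt [u_lt u_size].
case: s s_lt s_size => [|x s] s_lt s_size; first by rewrite -s_size in X_gt0.
case: u u_lt u_size => [|z u] u_lt u_size.
  by move: X_lt; rewrite -subn_gt0 -card_setC_ord -u_size.
by rewrite altw_max_inner //= ?(andP u_lt).1 // -s_size /= negbK.
Qed.

End SplitAtMaximum.

Lemma Ahat_succ_double (R : comPzRingType) (t q : R) n :
  2%:R * Ahat n.+1 t q =
  \sum_(X : {set 'I_n}) (split_weight t q false X + split_weight t q true X).
Proof.
by rewrite mulr_natl mulr2n {1}(Ahat_succ_split _ _ false) (Ahat_succ_split _ _ true) big_split.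
Qed.

Theorem theorem2p2 (R : comPzRingType) (n : nat) (t q : R) : (1 <= n)%N ->
  Ahat 1 t q = 1 /\
  2%:R * Ahat n.+1 t q =
    (1 + t * q) * Ahat n (t * q) q + (1 + t * q ^+ n) * Ahat n t q
    + \sum_(1 <= i < n) (1 + t ^+ 2 * q ^+ (2 * i + 1)) * ('C(n, i))%:R
        * Ahat i t q * Ahat (n - i) (t * q ^+ i.+1) q.
Proof.
move=> n_gt0; split; first exact: Ahat1.
rewrite Ahat_succ_double sum_set_by_card card_ord big_nat_recr //= big_ltn //= addrAC.
set G := (fun A : {set 'I_n} => split_weight t q false A + split_weight t q true A).
have -> : \sum_(X : {set 'I_n} | #|X| == 0%N) G X = (1 + t * q) * Ahat n (t * q) q.
  rewrite (sum_card_eq_const (c := (1 + t * q) * Ahat n (t * q) q)) ?card_ord ?bin0 //.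
  by move=> X X0; rewrite /G !split_weight_empty //=; ring.
have -> : \sum_(X : {set 'I_n} | #|X| == n) G X = (1 + t * q ^+ n) * Ahat n t q.
  rewrite (sum_card_eq_const (c := (1 + t * q ^+ n) * Ahat n t q)) ?card_ord ?binn //.
  by move=> X Xn; rewrite /G !split_weight_full //; case: (odd n) => /=; ring.
congr (_ + _); apply: eq_big_nat => i /andP [i_gt0 i_lt].
rewrite (sum_card_eq_const (c := (1 + t ^+ 2 * q ^+ (2 * i + 1)) * Ahat i t q *
                                 Ahat (n - i) (t * q ^+ i.+1) q)) ?card_ord.
  by rewrite -mulr_natr; ring.
move=> X Xi; rewrite /G !split_weight_proper ?Xi ?i_gt0 //.
by case: (odd i) => /=; ring.
Qed.
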